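(* Let $\mathcal{Q}$ be a small Cauchy-bilateral quantaloid. Then the Cauchy completion $\mathbb{A}_{\mathsf{cc}}$ of every symmetric $\mathcal{Q}$-category $\mathbb{A}$ is symmetric, and the symmetrisation $\mathbb{C}_{\mathsf s}$ of every Cauchy complete $\mathcal{Q}$-category $\mathbb{C}$ is Cauchy complete. (That is, Cauchy completion restricts to an endofunctor of $\mathsf{SymCat}(\mathcal{Q})$ and symmetrisation restricts to an endofunctor of the full subcategory of Cauchy complete $\mathcal{Q}$-categories.)
   Context: A quantaloid is a category enriched in $\mathsf{Sup}$ (complete lattices and supremum-preserving maps). An involution on $\mathcal{Q}$ is an assignment $f\mapsto f^{\mathsf o}$ on morphisms, identity on objects, sending $f\colon X\to Y$ to $f^{\mathsf o}\colon Y\to X$, monotone, with $(g\circ f)^{\mathsf o}=f^{\mathsf o}\circ g^{\mathsf o}$ and $f^{\mathsf{oo}}=f$. $\mathcal{Q}$ is Cauchy-bilateral if it is involutive and for every object $X$ and every family $(f_i\colon X\to X_i,\ g_i\colon X_i\to X)_{i\in I}$ of morphisms: if $f_k\circ g_j\circ f_j\le f_k$ and $g_j\circ f_j\circ g_k\le g_k$ for all $j,k\in I$ and $1_X\le\bigvee_i g_i\circ f_i$, then $1_X\le\bigvee_i(g_i\wedge f_i^{\mathsf o})\circ(g_i^{\mathsf o}\wedge f_i)$. A $\mathcal{Q}$-category $\mathbb{A}$: a set $\mathbb{A}_0$ of objects with types $tx\in\mathcal{Q}_0$ and homs $\mathbb{A}(y,x)\colon tx\to ty$ with $\mathbb{A}(z,y)\circ\mathbb{A}(y,x)\le\mathbb{A}(z,x)$,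 $1_{tx}\le\mathbb{A}(x,x)$. Functors $F\colon\mathbb{A}\to\mathbb{B}$: type-preserving object maps with $\mathbb{A}(y,x)\le\mathbb{B}(Fy,Fx)$. $\mathbb{A}$ is symmetric if $\mathbb{A}(x,y)=\mathbb{A}(y,x)^{\mathsf o}$. The symmetrisation $\mathbb{A}_{\mathsf s}$ has the same objects and $\mathbb{A}_{\mathsf s}(y,x)=\mathbb{A}(y,x)\wedge\mathbb{A}(x,y)^{\mathsf o}$. A distributor $\Phi\colon\mathbb{A}\to\mathbb{B}$: arrows $\Phi(y,x)\colon tx\to ty$ with $\mathbb{B}(y',y)\circ\Phi(y,x)\le\Phi(y',x)$, $\Phi(y,x)\circ\mathbb{A}(x,x')\le\Phi(y,x')$; composition $(\Psi\otimes\Phi)(z,x)=\bigvee_y\Psi(z,y)\circ\Phi(y,x)$, identities $\mathbb{A}(-,-)$, elementwise order. $\Phi$ is a left adjoint with right adjoint $\Phi^*$ if $\mathbb{A}\le\Phi^*\otimes\Phi$ and $\Phi\otimes\Phi^*\le\mathbb{B}$. $*_X$ is the one-object $\mathcal{Q}$-category of type $X$ with hom $1_X$; a presheaf on $\mathbb{A}$ is a distributor $*_X\to\mathbb{A}$, and it is representable if it equals $\mathbb{A}(-,a)$ for some $a$ of type $X$. $\mathbb{A}$ is Cauchy complete if every left adjoint presheaf on it is representable. The Cauchy completion $\mathbb{A}_{\mathsf{cc}}$ has objects the left adjoint presheaves $\phi\colon *_X\to\mathbb{A}$ (type $X$) and hom $\mathbb{A}_{\mathsf{cc}}(\psi,\phi)$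 the unique element of $\psi^*\otimes\phi$. *)

Set Implicit Arguments.

Record Quantaloid := {
  Obj : Type;
  Hom : Obj -> Obj -> Type;
  qle : forall X Y, Hom X Y -> Hom X Y -> Prop;
  qsup : forall X Y, (Hom X Y -> Prop) -> Hom X Y;
  qcomp : forall X Y Z, Hom Y Z -> Hom X Y -> Hom X Z;
  qid : forall X, Hom X X;
  qle_refl : forall X Y (f : Hom X Y), qle f f;
  qle_trans : forall X Y (f g h : Hom X Y), qle f g -> qle g h -> qle f h;
  qle_antisym : forall X Y (f g : Hom X Y), qle f g -> qle g f -> f = g;
  qsup_ub : forall X Y (S : Hom X Y -> Prop) f, S f -> qle f (qsup S);
  qsup_least : forall X Y (S : Hom X Y -> Prop) u,
      (forall f, S f -> qle f u) -> qle (qsup S) u;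
  qcomp_assoc : forall W X Y Z (h : Hom Y Z) (g : Hom X Y) (f : Hom W X),
      qcomp h (qcomp g f) = qcomp (qcomp h g) f;
  qcomp_id_l : forall X Y (f : Hom X Y), qcomp (qid Y) f = f;
  qcomp_id_r : forall X Y (f : Hom X Y), qcomp f (qid X) = f;
  qcomp_sup_l : forall X Y Z (g : Hom Y Z) (S : Hom X Y -> Prop),
      qcomp g (qsup S) = qsup (fun h => exists f, S f /\ h = qcomp g f);
  qcomp_sup_r : forall X Y Z (S : Hom Y Z -> Prop) (f : Hom X Y),
      qcomp (qsup S) f = qsup (fun h => exists g, S g /\ h = qcomp g f)
}.

Arguments qle {q X Y} _ _.
Arguments qsup {q X Y} _.
Arguments qcomp {q X Y Z} _ _.
Arguments qid {q} X.

Section Defs.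
Variable Q : Quantaloid.

Definition qmeet {X Y : Obj Q} (f g : Hom Q X Y) : Hom Q X Y :=
  qsup (fun h => qle h f /\ qle h g).

Definition qjoin {X Y : Obj Q} {I : Type} (F : I -> Hom Q X Y) : Hom Q X Y :=
  qsup (fun h => exists i, h = F i).

Record Involution := {
  inv : forall X Y : Obj Q, Hom Q X Y -> Hom Q Y X;
  inv_mono : forall X Y (f g : Hom Q X Y), qle f g -> qle (inv _ _ f) (inv _ _ g);
  inv_comp : forall X Y Z (g : Hom Q Y Z) (f : Hom Q X Y),
      inv _ _ (qcomp g f) = qcomp (inv _ _ f) (inv _ _ g);
  inv_inv : forall X Y (f : Hom Q X Y), inv _ _ (inv _ _ f) = f
}.

Arguments inv i {X Y} _.

Definition cauchy_bilateral (o : Involution) : Prop :=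
  forall (X : Obj Q) (I : Type) (Xi : I -> Obj Q)
         (f : forall i, Hom Q X (Xi i)) (g : forall i, Hom Q (Xi i) X),
    (forall j k, qle (qcomp (f k) (qcomp (g j) (f j))) (f k)) ->
    (forall j k, qle (qcomp (g j) (qcomp (f j) (g k))) (g k)) ->
    qle (qid X) (qjoin (fun i => qcomp (g i) (f i))) ->
    qle (qid X)
        (qjoin (fun i => qcomp (qmeet (g i) (inv o (f i)))
                               (qmeet (inv o (g i)) (f i)))).

Record QCatData := {
  ob : Type;
  ty : ob -> Obj Q;
  hom : forall y x : ob, Hom Q (ty x) (ty y)   (* hom y x = A(y,x) : tx -> ty *)
}.

Definition is_QCat (A : QCatData) : Prop :=
  (forall z y x, qle (qcomp (hom A z y) (hom A y x)) (hom A z x)) /\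
  (forall x, qle (qid (ty A x)) (hom A x x)).

Definition symmetric (o : Involution) (A : QCatData) : Prop :=
  forall x y, hom A x y = inv o (hom A y x).

Definition symmetrisation (o : Involution) (A : QCatData) : QCatData := {|
  ob := ob A;
  ty := ty A;
  hom := fun y x => qmeet (hom A y x) (inv o (hom A x y))
|}.

Definition RDist (A B : QCatData) : Type :=
  forall (y : ob B) (x : ob A), Hom Q (ty A x) (ty B y).

Definition is_dist {A B : QCatData} (Phi : RDist A B) : Prop :=
  (forall y' y x, qle (qcomp (hom B y' y) (Phi y x)) (Phi y' x)) /\
  (forall y x x', qle (qcomp (Phi y x) (hom A x x')) (Phi y x')).

Definition dcomp {A B C : QCatData} (Psi : RDist B C) (Phi : RDist A B)
  : RDist A C :=
  fun z x => qsup (fun h => exists y, h = qcomp (Psi z y) (Phi y x)).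

Definition did (A : QCatData) : RDist A A := hom A.

Definition dle {A B : QCatData} (Phi Phi' : RDist A B) : Prop :=
  forall y x, qle (Phi y x) (Phi' y x).

Definition adjoint {A B : QCatData} (Phi : RDist A B) (Psi : RDist B A) : Prop :=
  dle (did A) (dcomp Psi Phi) /\ dle (dcomp Phi Psi) (did B).

Definition left_adjoint {A B : QCatData} (Phi : RDist A B) : Prop :=
  exists Psi : RDist B A, is_dist Psi /\ adjoint Phi Psi.

Definition star (X : Obj Q) : QCatData := {|
  ob := unit;
  ty := fun _ => X;
  hom := fun _ _ => qid X
|}.

(** presheaves of type X on A are distributors *_X -> A *)
Definition representable {A : QCatData} {X : Obj Q} (phi : RDist (star X) A)
  : Prop :=
  exists (a : ob A) (e : ty A a = X),
    forall y : ob A,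
      phi y tt = eq_rect (ty A a) (fun Z => Hom Q Z (ty A y)) (hom A y a) X e.

Definition cauchy_complete (A : QCatData) : Prop :=
  forall (X : Obj Q) (phi : RDist (star X) A),
    is_dist phi -> left_adjoint phi -> representable phi.

(** * Cauchy completion.
    An object is a left adjoint presheaf phi together with its (unique)
    right adjoint rho = phi^*. *)
Record ccObj (A : QCatData) := {
  cc_type : Obj Q;
  cc_phi : RDist (star cc_type) A;
  cc_rho : RDist A (star cc_type);
  cc_phi_dist : is_dist cc_phi;
  cc_rho_dist : is_dist cc_rho;
  cc_adj : adjoint cc_phi cc_rho
}.

Definition cauchy_completion (A : QCatData) : QCatData := {|
  ob := ccObj A;
  ty := @cc_type A;
  hom := fun psi phi => dcomp (cc_rho psi) (cc_phi phi) tt tt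
|}.

End Defs.

From Stdlib Require Import Setoid.

(* In a symmetric Q-category the Cauchy-bilateral law, applied to the unit
   1 <= \/_b rho b o phi b of a left adjoint presheaf phi -| rho, forces
   rho = phi^o.  Hence a hom \/_b rho_psi b o phi_chi b of the Cauchy
   completion is turned by the involution into \/_b rho_chi b o phi_psi b.
   For symmetrisation: a left adjoint presheaf phi -| rho on C_s yields the
   left adjoint presheaf C (x) phi -| rho (x) C on C, represented by some a
   when C is Cauchy complete.  Then phi <= C(-,a) and rho <= C(a,-); with
   rho = phi^o this gives phi <= C_s(-,a) and rho <= C_s(a,-), and the unit of
   the adjunction gives C_s(-,a) <= phi. *)

Section CauchyBilateral.
Context {Q : Quantaloid}.

Local Infix "⊑" := qle (at level 70).
Local Notation "g ∘ f" := (qcomp g f) (at level 40, left associativity).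
Local Infix "⊓" := (qmeet Q) (at level 40).

Lemma le_qsup {X Y : Obj Q} (S : Hom Q X Y -> Prop) (x f : Hom Q X Y) :
  S f -> x ⊑ f -> x ⊑ qsup S.
Proof. intros Sf Hxf. eapply qle_trans; [exact Hxf | apply qsup_ub, Sf]. Qed.

Lemma qsup_pair_of_le {X Y : Obj Q} (f f' : Hom Q X Y) :
  f ⊑ f' -> f' = qsup (fun h => h = f \/ h = f').
Proof.
  intros H. apply qle_antisym.
  - apply qsup_ub. now right.
  - apply qsup_least. intros h [-> | ->]; [exact H | apply qle_refl].
Qed.

Lemma qcomp_mono_r {X Y Z : Obj Q} (g : Hom Q Y Z) (f f' : Hom Q X Y) :
  f ⊑ f' -> g ∘ f ⊑ g ∘ f'.
Proof.
  intros H. rewrite (qsup_pair_of_le _ _ H), qcomp_sup_l.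
  apply qsup_ub. exists f. split; [now left | reflexivity].
Qed.

Lemma qcomp_mono_l {X Y Z : Obj Q} (g g' : Hom Q Y Z) (f : Hom Q X Y) :
  g ⊑ g' -> g ∘ f ⊑ g' ∘ f.
Proof.
  intros H. rewrite (qsup_pair_of_le _ _ H), qcomp_sup_r.
  apply qsup_ub. exists g. split; [now left | reflexivity].
Qed.

Lemma qcomp_mono {X Y Z : Obj Q} (g g' : Hom Q Y Z) (f f' : Hom Q X Y) :
  g ⊑ g' -> f ⊑ f' -> g ∘ f ⊑ g' ∘ f'.
Proof.
  intros Hg Hf. eapply qle_trans; [apply qcomp_mono_l, Hg | apply qcomp_mono_r, Hf].
Qed.

Lemma le_qcomp_of_unit_l {X Y : Obj Q} (u : Hom Q Y Y) (f : Hom Q X Y) :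
  qid Y ⊑ u -> f ⊑ u ∘ f.
Proof. intros H. rewrite <- (qcomp_id_l Q _ _ f) at 1. apply qcomp_mono_l, H. Qed.

Lemma le_qcomp_of_unit_r {X Y : Obj Q} (u : Hom Q X X) (f : Hom Q X Y) :
  qid X ⊑ u -> f ⊑ f ∘ u.
Proof. intros H. rewrite <- (qcomp_id_r Q _ _ f) at 1. apply qcomp_mono_r, H. Qed.

Lemma qmeet_l {X Y : Obj Q} (f g : Hom Q X Y) : f ⊓ g ⊑ f.
Proof. apply qsup_least. intros h [H _]. exact H. Qed.

Lemma qmeet_r {X Y : Obj Q} (f g : Hom Q X Y) : f ⊓ g ⊑ g.
Proof. apply qsup_least. intros h [_ H]. exact H. Qed.

Lemma qmeet_glb {X Y : Obj Q} (f g h : Hom Q X Y) : h ⊑ f -> h ⊑ g -> h ⊑ f ⊓ g.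
Proof. intros Hf Hg. apply qsup_ub. split; assumption. Qed.

Lemma qmeet_comm {X Y : Obj Q} (f g : Hom Q X Y) : f ⊓ g = g ⊓ f.
Proof. apply qle_antisym; apply qmeet_glb; (apply qmeet_l || apply qmeet_r). Qed.

Lemma qjoin_eq {X Y : Obj Q} {I : Type} (F G : I -> Hom Q X Y) :
  (forall i, F i = G i) -> qjoin Q F = qjoin Q G.
Proof.
  intros E. apply qle_antisym; apply qsup_least; intros h [i ->]; apply qsup_ub;
    exists i; [apply E | symmetry; apply E].
Qed.

Lemma presheaf_counit {A : QCatData Q} {X : Obj Q}
  {phi : RDist (star Q X) A} {rho : RDist A (star Q X)} :
  adjoint phi rho -> forall b c, phi b tt ∘ rho tt c ⊑ hom A b c.
Proof.
  intros [_ Counit] b c. eapply qle_trans; [| apply Counit].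
  apply qsup_ub. exists tt. reflexivity.
Qed.

Lemma hom_comp_presheaf_is_dist {C : QCatData Q} {X : Obj Q} (phi : RDist (star Q X) C) :
  is_QCat C -> is_dist (dcomp (did C) phi).
Proof.
  intros [Hcomp _]. split.
  - intros y' y u. unfold dcomp. rewrite qcomp_sup_l. apply qsup_least.
    intros h [g [[b ->] ->]]. rewrite qcomp_assoc.
    apply le_qsup with (f := hom C y' b ∘ phi b u); [exists b; reflexivity |].
    apply qcomp_mono_l, Hcomp.
  - intros y [] []. change (hom (star Q X) tt tt) with (qid X).
    rewrite qcomp_id_r. apply qle_refl.
Qed.

Lemma copresheaf_hom_comp_is_dist {C : QCatData Q} {X : Obj Q} (rho : RDist C (star Q X)) :
  is_QCat C -> is_dist (dcomp rho (did C)).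
Proof.
  intros [Hcomp _]. split.
  - intros [] [] y. change (hom (star Q X) tt tt) with (qid X).
    rewrite qcomp_id_l. apply qle_refl.
  - intros u y y'. unfold dcomp. rewrite qcomp_sup_r. apply qsup_least.
    intros h [g [[b ->] ->]]. rewrite <- qcomp_assoc.
    apply le_qsup with (f := rho u b ∘ hom C b y'); [exists b; reflexivity |].
    apply qcomp_mono_r, Hcomp.
Qed.

(* [phi] and [rho] need not be distributors on [C]; below they are only distributors on [C_s]. *)
Lemma adjoint_hom_comp {C : QCatData Q} {X : Obj Q}
  {phi : RDist (star Q X) C} {rho : RDist C (star Q X)} :
  is_QCat C -> adjoint phi rho -> adjoint (dcomp (did C) phi) (dcomp rho (did C)).
Proof.
  intros [Hcomp Hid] Adj. pose proof (presheaf_counit Adj) as Counit. split.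
  - intros [] []. eapply qle_trans; [apply (proj1 Adj tt tt) |].
    apply qsup_least. intros h [b ->].
    apply le_qsup with (f := dcomp rho (did C) tt b ∘ dcomp (did C) phi b tt);
      [exists b; reflexivity |].
    apply qcomp_mono.
    + apply le_qsup with (f := rho tt b ∘ hom C b b); [exists b; reflexivity |].
      apply le_qcomp_of_unit_r, Hid.
    + apply le_qsup with (f := hom C b b ∘ phi b tt); [exists b; reflexivity |].
      apply le_qcomp_of_unit_l, Hid.
  - intros y z. apply qsup_least. intros h [[] ->]. unfold dcomp, did.
    rewrite qcomp_sup_l. apply qsup_least. intros h [g [[b ->] ->]].
    rewrite qcomp_sup_r. apply qsup_least. intros h [g' [[c ->] ->]].
    rewrite <- qcomp_assoc, (qcomp_assoc _ _ _ _ _ (phi c tt)).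
    eapply qle_trans; [apply qcomp_mono_r, qcomp_mono_l, Counit |].
    eapply qle_trans; [apply qcomp_mono_r, Hcomp | apply Hcomp].
Qed.

Lemma presheaf_le_of_hom_comp_eq {C : QCatData Q} {a : ob C}
  {phi : RDist (star Q (ty C a)) C} :
  is_QCat C -> (forall y, dcomp (did C) phi y tt = hom C y a) ->
  forall y, phi y tt ⊑ hom C y a.
Proof.
  intros [_ Hid] Hrep y. rewrite <- Hrep.
  apply le_qsup with (f := hom C y y ∘ phi y tt); [exists y; reflexivity |].
  apply le_qcomp_of_unit_l, Hid.
Qed.

Lemma copresheaf_le_of_hom_comp_eq {C : QCatData Q} {a : ob C}
  {phi : RDist (star Q (ty C a)) C} {rho : RDist C (star Q (ty C a))} :
  is_QCat C -> (forall y, dcomp (did C) phi y tt = hom C y a) -> adjoint phi rho ->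
  forall y, rho tt y ⊑ hom C a y.
Proof.
  intros [Hcomp Hid] Hrep Adj y.
  eapply qle_trans; [apply le_qcomp_of_unit_l, (Hid a) |].
  rewrite <- (Hrep a). unfold dcomp, did. rewrite qcomp_sup_r. apply qsup_least.
  intros h [g [[b ->] ->]]. rewrite <- qcomp_assoc.
  eapply qle_trans; [apply qcomp_mono_r, (presheaf_counit Adj) | apply Hcomp].
Qed.

Lemma representable_of_adjoint_bounded {A : QCatData Q} {a : ob A}
  {phi : RDist (star Q (ty A a)) A} {rho : RDist A (star Q (ty A a))} :
  is_QCat A -> is_dist phi -> adjoint phi rho ->
  (forall y, phi y tt ⊑ hom A y a) -> (forall y, rho tt y ⊑ hom A a y) ->
  representable phi.
Proof.
  intros [Hcomp _] [Phi_l _] [Unit _] Hphi Hrho.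
  exists a, eq_refl. intros y. cbn. apply qle_antisym; [apply Hphi |].
  eapply qle_trans; [apply le_qcomp_of_unit_r, (Unit tt tt) |].
  unfold dcomp. rewrite qcomp_sup_l. apply qsup_least. intros h [g [[b ->] ->]].
  rewrite qcomp_assoc. eapply qle_trans; [apply qcomp_mono_l | apply (Phi_l y b tt)].
  eapply qle_trans; [apply qcomp_mono_r, Hrho | apply Hcomp].
Qed.

Context (o : Involution Q).

Local Notation "f ^o" := (inv o _ _ f) (at level 8, format "f ^o").

Lemma inv_le_swap {X Y : Obj Q} (f : Hom Q X Y) (g : Hom Q Y X) : f^o ⊑ g -> f ⊑ g^o.
Proof. intros H. rewrite <- (inv_inv o _ _ f). apply inv_mono, H. Qed.

Lemma le_inv_swap {X Y : Obj Q} (f : Hom Q X Y) (g : Hom Q Y X) : f ⊑ g^o -> f^o ⊑ g.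
Proof. intros H. rewrite <- (inv_inv o _ _ g). apply inv_mono, H. Qed.

Lemma inv_qid (X : Obj Q) : (qid X)^o = qid X.
Proof.
  assert (E : (qid X ∘ (qid X)^o)^o = (qid X)^o).
  { rewrite inv_comp, inv_inv. apply qcomp_id_l. }
  rewrite qcomp_id_l, inv_inv in E. symmetry. exact E.
Qed.

Lemma inv_qmeet {X Y : Obj Q} (f g : Hom Q X Y) : (f ⊓ g)^o = f^o ⊓ g^o.
Proof.
  apply qle_antisym.
  - apply qmeet_glb; apply inv_mono; [apply qmeet_l | apply qmeet_r].
  - apply inv_le_swap, qmeet_glb; apply le_inv_swap; [apply qmeet_l | apply qmeet_r].
Qed.

Lemma inv_qjoin {X Y : Obj Q} {I : Type} (F : I -> Hom Q X Y) :
  (qjoin Q F)^o = qjoin Q (fun i => (F i)^o).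
Proof.
  apply qle_antisym.
  - apply le_inv_swap, qsup_least. intros f [i ->].
    apply inv_le_swap, qsup_ub. exists i. reflexivity.
  - apply qsup_least. intros h [i ->]. apply inv_mono, qsup_ub. exists i. reflexivity.
Qed.

Lemma right_adjoint_presheaf_eq_inv {A : QCatData Q} {X : Obj Q}
  {phi : RDist (star Q X) A} {rho : RDist A (star Q X)} :
  cauchy_bilateral o -> symmetric o A ->
  is_dist phi -> is_dist rho -> adjoint phi rho ->
  forall a, rho tt a = (phi a tt)^o.
Proof.
  intros CB Sym [Phi_l _] [_ Rho_r] Adj.
  pose proof (presheaf_counit Adj) as Counit.
  assert (Unit : qid X ⊑ qjoin Q (fun b => (rho tt b ⊓ (phi b tt)^o) ∘ ((rho tt b)^o ⊓ phi b tt))).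
  { apply (CB X (ob A) (ty A) (fun b => phi b tt) (fun b => rho tt b)).
    - intros j k. rewrite qcomp_assoc.
      eapply qle_trans; [apply qcomp_mono_l, Counit | apply Phi_l].
    - intros j k. eapply qle_trans; [apply qcomp_mono_r, Counit | apply Rho_r].
    - exact (proj1 Adj tt tt). }
  intros a. apply qle_antisym.
  - eapply qle_trans; [apply le_qcomp_of_unit_l, Unit |].
    unfold qjoin. rewrite qcomp_sup_r. apply qsup_least. intros h [g [[b ->] ->]].
    rewrite <- qcomp_assoc.
    eapply qle_trans.
    { apply qcomp_mono; [apply qmeet_r |].
      eapply qle_trans; [apply qcomp_mono_l, qmeet_r | apply Counit]. }
    rewrite (Sym b a), <- inv_comp. apply inv_mono, Phi_l.
  - apply le_inv_swap.
    eapply qle_trans; [apply le_qcomp_of_unit_r, Unit |].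
    unfold qjoin. rewrite qcomp_sup_l. apply qsup_least. intros h [g [[b ->] ->]].
    rewrite qcomp_assoc.
    eapply qle_trans.
    { apply qcomp_mono; [| apply qmeet_l].
      eapply qle_trans; [apply qcomp_mono_r, qmeet_l | apply Counit]. }
    rewrite (Sym a b), <- inv_comp. apply inv_mono, Rho_r.
Qed.

Lemma cauchy_completion_symmetric (A : QCatData Q) :
  cauchy_bilateral o -> symmetric o A -> symmetric o (cauchy_completion A).
Proof.
  intros CB Sym psi chi.
  assert (Rho_inv : forall (z : ccObj A) b, cc_rho z tt b = (cc_phi z b tt)^o).
  { intros z. apply (right_adjoint_presheaf_eq_inv CB Sym);
      [apply cc_phi_dist | apply cc_rho_dist | apply cc_adj]. }
  change (qjoin Q (fun b => cc_rho psi tt b ∘ cc_phi chi b tt)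
          = (qjoin Q (fun b => cc_rho chi tt b ∘ cc_phi psi b tt))^o).
  rewrite inv_qjoin. apply qjoin_eq. intros b.
  rewrite inv_comp, !Rho_inv, inv_inv. reflexivity.
Qed.

Lemma symmetrisation_symmetric (C : QCatData Q) : symmetric o (symmetrisation o C).
Proof. intros x y. cbn. rewrite inv_qmeet, inv_inv. apply qmeet_comm. Qed.

Lemma symmetrisation_is_QCat (C : QCatData Q) : is_QCat C -> is_QCat (symmetrisation o C).
Proof.
  intros [Hcomp Hid]. split.
  - intros z y x. cbn. apply qmeet_glb.
    + eapply qle_trans; [apply qcomp_mono; apply qmeet_l | apply Hcomp].
    + eapply qle_trans; [apply qcomp_mono; apply qmeet_r |].
      rewrite <- inv_comp. apply inv_mono, Hcomp.
  - intros x. cbn. apply qmeet_glb; [apply Hid |].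
    apply inv_le_swap. rewrite inv_qid. apply Hid.
Qed.

Lemma le_symmetrisation_hom (C : QCatData Q) (y x : ob C) (f : Hom Q (ty C x) (ty C y)) :
  f ⊑ hom C y x -> f^o ⊑ hom C x y -> f ⊑ hom (symmetrisation o C) y x.
Proof. intros H1 H2. apply qmeet_glb; [exact H1 | apply inv_le_swap, H2]. Qed.

Lemma symmetrisation_cauchy_complete (C : QCatData Q) :
  cauchy_bilateral o -> is_QCat C -> cauchy_complete C ->
  cauchy_complete (symmetrisation o C).
Proof.
  intros CB HC CC X phi Phi_dist [rho [Rho_dist Adj]].
  pose proof (right_adjoint_presheaf_eq_inv CB (symmetrisation_symmetric C)
                Phi_dist Rho_dist Adj) as Rho_inv.
  cbn in Rho_inv.
  assert (AdjC : adjoint (B := C) phi rho).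
  { destruct Adj as [Unit Counit]. split; [exact Unit |].
    intros y x. eapply qle_trans; [apply Counit | apply qmeet_l]. }
  destruct (CC X _ (hom_comp_presheaf_is_dist (C := C) phi HC)
              (ex_intro _ _ (conj (copresheaf_hom_comp_is_dist (C := C) rho HC)
                                  (adjoint_hom_comp HC AdjC))))
    as [a [e Hrep]].
  subst X. cbn in Hrep.
  pose proof (presheaf_le_of_hom_comp_eq HC Hrep) as Hphi.
  pose proof (copresheaf_le_of_hom_comp_eq HC Hrep AdjC) as Hrho.
  apply (representable_of_adjoint_bounded (symmetrisation_is_QCat C HC) Phi_dist Adj);
    intros y; apply (le_symmetrisation_hom C).
  - apply Hphi.
  - rewrite <- Rho_inv. apply Hrho.
  - apply Hrho.
  - rewrite Rho_inv, inv_inv. apply Hphi.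
Qed.

End CauchyBilateral.

Theorem corollary3p9 (Q : Quantaloid) (o : Involution Q) :
  cauchy_bilateral o ->
  (forall A : QCatData Q,
      is_QCat A -> symmetric o A -> symmetric o (cauchy_completion A)) /\
  (forall C : QCatData Q,
      is_QCat C -> cauchy_complete C -> cauchy_complete (symmetrisation o C)).
Proof.
  intros CB. split.
  - intros A _ Sym. exact (cauchy_completion_symmetric o A CB Sym).
  - intros C HC CC. exact (symmetrisation_cauchy_complete o C CB HC CC).
Qed.
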